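(* If the indefinite binary quadratic form $(A,B,C)$ over $\mathbb{Q}((1/T))$ is reduced, then the form $(C,B,A)$ is reduced.
   Context: $\mathbb{Q}((1/T))$ is the field of formal Laurent series in $1/T$ over $\mathbb{Q}$; $\deg$ of a nonzero series is the exponent of its leading term, $\deg0=-\infty$. A binary quadratic form $(A,B,C)$ is $AX^2+BXY+CY^2$ with $A,B,C\in\mathbb{Q}((1/T))$ not all in $\mathbb{Q}(T)$, discriminant $D=B^2-4AC$; indefinite means $D\ne0$ is a square in $\mathbb{Q}((1/T))$; a square root $\sqrt D$ is fixed (the same for both forms, which have the same discriminant). If $A\neq0$, the first and second roots are $f=\frac{\sqrt D-B}{2A}$ and $s=\frac{-\sqrt D-B}{2A}$. The form is reduced if $A\ne0$, $f\ne0$ and $\deg f<0<\deg s$. *)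

From Stdlib Require Import ClassicalEpsilon.
From mathcomp Require Import all_boot all_order all_algebra.
From mathcomp Require Import zify.

Set Implicit Arguments.
Unset Strict Implicit.
Unset Printing Implicit Defensive.
Import Order.TTheory GRing.Theory Num.Theory.
Local Open Scope ring_scope.

(* An element of Q((1/T)): coefficient family (coef x i = coefficient of T^i)
   with support bounded above. *)
Record laurent := Laurent {
  coef : int -> rat ;
  coef_bnd : exists N : int, forall i : int, N < i -> coef i = 0 }.

Definition bnd_of (f : int -> rat) : int :=
  epsilon (inhabits 0) (fun N : int => forall i : int, N < i -> f i = 0).

Lemma bnd_ofP (x : laurent) i : bnd_of (coef x) < i -> coef x i = 0.
Proof. exact: (epsilon_spec (inhabits 0) _ (coef_bnd x)). Qed.

Definition Lzero : laurent := @Laurent (fun _ => 0) (ex_intro _ 0 (fun _ _ => erefl)).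

Lemma Lone_bnd : exists N : int, forall i : int, N < i ->
  (if i == 0 then 1 else 0 : rat) = 0.
Proof. by exists 0 => i Hi; rewrite gt_eqF. Qed.
Definition Lone : laurent := Laurent Lone_bnd.

Lemma Ladd_bnd (x y : laurent) : exists N : int, forall i : int, N < i ->
  coef x i + coef y i = 0.
Proof.
exists (Num.max (bnd_of (coef x)) (bnd_of (coef y))) => i; rewrite gt_max => /andP[h1 h2].
by rewrite !bnd_ofP ?addr0.
Qed.
Definition Ladd (x y : laurent) : laurent := Laurent (Ladd_bnd x y).

Lemma Lopp_bnd (x : laurent) : exists N : int, forall i : int, N < i -> - coef x i = 0.
Proof. by exists (bnd_of (coef x)) => i h; rewrite bnd_ofP ?oppr0. Qed.
Definition Lopp (x : laurent) : laurent := Laurent (Lopp_bnd x).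

(* Cauchy product: coefficient of T^n is the (finite) sum of
   coef x i * coef y (n - i) over n - bnd y <= i <= bnd x. *)
Definition mul_coef (x y : laurent) (n : int) : rat :=
  let lo := n - bnd_of (coef y) in
  \sum_(k < absz (Num.max 0 (bnd_of (coef x) - lo + 1)))
     coef x (lo + k%:Z) * coef y (n - (lo + k%:Z)).

Lemma Lmul_bnd (x y : laurent) : exists N : int, forall i : int, N < i ->
  mul_coef x y i = 0.
Proof.
exists (bnd_of (coef x) + bnd_of (coef y)) => i hi.
rewrite /mul_coef.
have -> : Num.max 0 (bnd_of (coef x) - (i - bnd_of (coef y)) + 1) = 0.
  by apply/max_idPl; lia.
by rewrite big_ord0.
Qed.
Definition Lmul (x y : laurent) : laurent := Laurent (Lmul_bnd x y).

Definition Linv (x : laurent) : laurent :=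
  epsilon (inhabits Lzero) (fun y => Lmul x y = Lone).
Definition Ldiv (x y : laurent) : laurent := Lmul x (Linv y).

Definition Ltwo : laurent := Ladd Lone Lone.
Definition Lfour : laurent := Ladd Ltwo Ltwo.

(* deg: None stands for -oo (deg 0), Some d for the exponent of the leading term *)
Definition deg (x : laurent) : option int :=
  epsilon (inhabits None) (fun o => match o with
    | None => x = Lzero
    | Some d => coef x d != 0 /\ forall i : int, d < i -> coef x i = 0 end).

Definition deg_lt (a b : option int) : Prop :=
  match a, b with
  | None, None => False
  | None, Some _ => True
  | Some _, None => False
  | Some m, Some n => m < n
  end.

Lemma Lpoly_bnd (p : {poly rat}) : exists N : int, forall i : int, N < i ->
  (match i with Posz n => p`_n | Negz _ => 0 end) = 0.
Proof.
exists (size p)%:Z => -[n|n] //= h; apply: nth_default; lia.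
Qed.
Definition Lpoly (p : {poly rat}) : laurent := Laurent (Lpoly_bnd p).

Definition in_QT (x : laurent) : Prop :=
  exists p q : {poly rat}, q != 0 /\ Lmul x (Lpoly q) = Lpoly p.

Definition disc (A B C : laurent) : laurent :=
  Ladd (Lmul B B) (Lopp (Lmul Lfour (Lmul A C))).

Definition first_root (sD A B : laurent) : laurent :=
  Ldiv (Ladd sD (Lopp B)) (Lmul Ltwo A).
Definition second_root (sD A B : laurent) : laurent :=
  Ldiv (Ladd (Lopp sD) (Lopp B)) (Lmul Ltwo A).

Definition reduced (sD A B C : laurent) : Prop :=
  A <> Lzero /\ first_root sD A B <> Lzero /\
  deg_lt (deg (first_root sD A B)) (Some 0) /\
  deg_lt (Some 0) (deg (second_root sD A B)).

(* Put a = sqrt D - B and b = - sqrt D - B, so that f = a / 2A and s = b / 2A, while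
   the roots of (C,B,A) are a / 2C and b / 2C.  Since ab = B^2 - D = 4AC and the
   degree is additive (leading coefficients multiply in Q, and a nonzero series has
   an inverse of opposite degree), deg a + deg b = deg A + deg C.  Hence
   deg (a / 2C) = deg A - deg b = - deg s < 0 and deg (b / 2C) = - deg f > 0. *)
From mathcomp Require Import all_boot all_order all_algebra.
From mathcomp Require Import zify ring.
From Stdlib Require Import ClassicalEpsilon FunctionalExtensionality ProofIrrelevance.

Set Implicit Arguments.
Unset Strict Implicit.
Unset Printing Implicit Defensive.
Import Order.TTheory GRing.Theory Num.Theory.
Local Open Scope ring_scope.

Lemma laurent_ext (x y : laurent) : (forall i : int, coef x i = coef y i) -> x = y.
Proof.
case: x => fx hx; case: y => fy hy /= exy.
have efxy : fx = fy by apply: functional_extensionality.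
by subst fy; congr Laurent; apply: proof_irrelevance.
Qed.

Section WindowSum.
Variable V : nmodType.

Definition window_sum (F : int -> V) (lo : int) (len : nat) : V :=
  \sum_(k < len) F (lo + k%:Z).

Lemma window_sum_cat (F : int -> V) (lo : int) (m n : nat) :
  window_sum F lo (m + n) = window_sum F lo m + window_sum F (lo + m%:Z) n.
Proof.
rewrite /window_sum big_split_ord /=; congr (_ + _); apply: eq_bigr => k _ /=.
by rewrite PoszD addrA.
Qed.

Lemma window_sum_eq0 (F : int -> V) (lo : int) (len : nat) :
  (forall k : nat, (k < len)%N -> F (lo + k%:Z) = 0) -> window_sum F lo len = 0.
Proof. by move=> F0; rewrite /window_sum big1 // => k _; apply: F0. Qed.

Lemma window_sum_widen (F : int -> V) (lo : int) (len : nat) (lo' : int) (len' : nat) :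
  (forall i : int, i < lo -> F i = 0) -> (forall i : int, lo + len%:Z <= i -> F i = 0) ->
  lo' <= lo -> lo + len%:Z <= lo' + len'%:Z ->
  window_sum F lo' len' = window_sum F lo len.
Proof.
move=> F_below F_above le_lo le_hi.
have -> : len' = (absz (lo - lo')%R + (len + absz (lo' + len'%:Z - lo - len%:Z)%R))%N by lia.
rewrite !window_sum_cat window_sum_eq0 ?add0r; last by move=> k hk; apply: F_below; lia.
rewrite [window_sum F (_ + _ + _) _]window_sum_eq0 ?addr0; last by move=> k hk; apply: F_above; lia.
by congr window_sum; lia.
Qed.

End WindowSum.

Definition conv_term (x y : laurent) (n i : int) : rat := coef x i * coef y (n - i).

Lemma conv_window_mono (x y : laurent) (n M1 M2 N1 N2 : int) :
  (forall i : int, M1 < i -> coef x i = 0) -> (forall i : int, M2 < i -> coef y i = 0) ->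
  M1 <= N1 -> M2 <= N2 ->
  window_sum (conv_term x y n) (n - N2) (absz (Num.max 0 (N1 - (n - N2) + 1))) =
  window_sum (conv_term x y n) (n - M2) (absz (Num.max 0 (M1 - (n - M2) + 1))).
Proof.
move=> x_above y_above le1 le2.
have [empty|nonempty] := lerP (M1 - (n - M2) + 1) 0.
  rewrite [RHS]window_sum_eq0; last by move=> k hk; lia.
  apply: window_sum_eq0 => k _; rewrite /conv_term.
  have [hi|hi] := lerP (n - N2 + k%:Z) M1; first by rewrite y_above ?mulr0 //; lia.
  by rewrite x_above ?mul0r.
apply: window_sum_widen; rewrite /conv_term; [| |lia|lia].
- by move=> i hi; rewrite y_above ?mulr0 //; lia.
- by move=> i hi; rewrite x_above ?mul0r //; lia.
Qed.

(* Frees [mul_coef] from the epsilon-chosen bounds [bnd_of]. *)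
Lemma mul_coef_window (x y : laurent) (n Mx My : int) :
  (forall i : int, Mx < i -> coef x i = 0) -> (forall i : int, My < i -> coef y i = 0) ->
  mul_coef x y n =
  window_sum (conv_term x y n) (n - My) (absz (Num.max 0 (Mx - (n - My) + 1))).
Proof.
move=> x_above y_above.
pose Nx := Num.max Mx (bnd_of (coef x)); pose Ny := Num.max My (bnd_of (coef y)).
have -> : mul_coef x y n = window_sum (conv_term x y n) (n - bnd_of (coef y))
    (absz (Num.max 0 (bnd_of (coef x) - (n - bnd_of (coef y)) + 1))) by [].
rewrite -(@conv_window_mono x y n _ _ Nx Ny); [|exact: bnd_ofP|exact: bnd_ofP|lia|lia].
by rewrite (@conv_window_mono x y n Mx My Nx Ny) //; lia.
Qed.

Lemma mul_coef_above (x y : laurent) (d e n : int) :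
  (forall i : int, d < i -> coef x i = 0) -> (forall i : int, e < i -> coef y i = 0) ->
  d + e < n -> mul_coef x y n = 0.
Proof.
move=> x_above y_above lt_n; rewrite (mul_coef_window n x_above y_above).
by apply: window_sum_eq0 => k hk; exfalso; lia.
Qed.

Lemma mul_coef_lead (x y : laurent) (d e : int) :
  (forall i : int, d < i -> coef x i = 0) -> (forall i : int, e < i -> coef y i = 0) ->
  mul_coef x y (d + e) = coef x d * coef y e.
Proof.
move=> x_above y_above; rewrite (mul_coef_window _ x_above y_above) /window_sum.
rewrite (_ : absz _ = 1%N); last by lia.
by rewrite big_ord1 /conv_term; congr (coef _ _ * coef _ _) => /=; lia.
Qed.

Lemma mul0L (y : laurent) : Lmul Lzero y = Lzero.
Proof.
apply: laurent_ext => n /=; rewrite (mul_coef_window n (@bnd_ofP Lzero) (@bnd_ofP y)).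
by apply: window_sum_eq0 => k _; rewrite /conv_term /= mul0r.
Qed.

Lemma mulL0 (x : laurent) : Lmul x Lzero = Lzero.
Proof.
apply: laurent_ext => n /=; rewrite (mul_coef_window n (@bnd_ofP x) (@bnd_ofP Lzero)).
by apply: window_sum_eq0 => k _; rewrite /conv_term /= mulr0.
Qed.

Lemma mul_coefDl (x y z : laurent) (n : int) :
  mul_coef (Ladd x y) z n = mul_coef x z n + mul_coef y z n.
Proof.
pose M := Num.max (bnd_of (coef x)) (bnd_of (coef y)).
have x_above (i : int) : M < i -> coef x i = 0.
  by rewrite gt_max => /andP[+ _]; exact: bnd_ofP.
have y_above (i : int) : M < i -> coef y i = 0.
  by rewrite gt_max => /andP[_ +]; exact: bnd_ofP.
have xy_above (i : int) : M < i -> coef (Ladd x y) i = 0.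
  by move=> hi /=; rewrite x_above ?y_above ?addr0.
rewrite (mul_coef_window n xy_above (@bnd_ofP z)) (mul_coef_window n x_above (@bnd_ofP z)).
rewrite (mul_coef_window n y_above (@bnd_ofP z)) /window_sum -big_split.
by apply: eq_bigr => k _; rewrite /conv_term /= mulrDl.
Qed.

Lemma mul_coefNl (x y : laurent) (n : int) : mul_coef (Lopp x) y n = - mul_coef x y n.
Proof.
have xN_above (i : int) : bnd_of (coef x) < i -> coef (Lopp x) i = 0.
  by move=> hi /=; rewrite bnd_ofP ?oppr0.
rewrite (mul_coef_window n xN_above (@bnd_ofP y)).
rewrite (mul_coef_window n (@bnd_ofP x) (@bnd_ofP y)) /window_sum -sumrN.
by apply: eq_bigr => k _; rewrite /conv_term /= mulNr.
Qed.

Lemma mul_coefC (x y : laurent) (n : int) : mul_coef x y n = mul_coef y x n.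
Proof.
rewrite (mul_coef_window n (@bnd_ofP x) (@bnd_ofP y)).
rewrite (mul_coef_window n (@bnd_ofP y) (@bnd_ofP x)) /window_sum.
set L1 := absz _; set L2 := absz _.
have -> : L2 = L1 by rewrite /L1 /L2; lia.
rewrite (reindex_inj rev_ord_inj) /=; apply: eq_bigr => -[k hk] _ /=.
by rewrite /conv_term mulrC; congr (coef _ _ * coef _ _); rewrite /L1 in hk *; lia.
Qed.

Lemma mul_coefDr (x y z : laurent) (n : int) :
  mul_coef z (Ladd x y) n = mul_coef z x n + mul_coef z y n.
Proof. by rewrite mul_coefC mul_coefDl !(mul_coefC z). Qed.

Lemma mul_coefNr (x y : laurent) (n : int) : mul_coef y (Lopp x) n = - mul_coef y x n.
Proof. by rewrite mul_coefC mul_coefNl mul_coefC. Qed.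

Definition has_deg (x : laurent) (d : int) : Prop :=
  coef x d != 0 /\ forall i : int, d < i -> coef x i = 0.

Definition deg_spec (x : laurent) (o : option int) : Prop :=
  if o is Some d then has_deg x d else x = Lzero.

Lemma has_deg_exists (x : laurent) : x <> Lzero -> exists d, has_deg x d.
Proof.
move=> x_neq0.
have [i0 xi0_neq0] : exists i0, coef x i0 != 0.
  apply: NNPP => no_i0; apply: x_neq0; apply: laurent_ext => i /=.
  by apply/eqP; apply: contraT => xi_neq0; case: no_i0; exists i.
set B := bnd_of (coef x).
have le_i0B : i0 <= B.
  by rewrite leNgt; apply: contraNN xi0_neq0 => /bnd_ofP ->.
pose P k := coef x (B - k%:Z) != 0.
have exP : exists k, P k.
  by exists (absz (B - i0)); rewrite /P (_ : B - _ = i0) //; lia.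
case: (ex_minnP exP) => k Pk k_min.
exists (B - k%:Z); split => // i lt_i.
have [lt_Bi|le_iB] := ltrP B i; first exact: bnd_ofP.
apply/eqP; apply: contraT => xi_neq0.
have : P (absz (B - i)) by rewrite /P (_ : B - _ = i) //; lia.
by move/k_min; lia.
Qed.

Lemma deg_specP (x : laurent) : deg_spec x (deg x).
Proof.
apply: (epsilon_spec (inhabits None) (deg_spec x)).
have [->|x_neq0] := classic (x = Lzero); first by exists None.
by have [d x_d] := has_deg_exists x_neq0; exists (Some d).
Qed.

Lemma deg_has_deg (x : laurent) (d : int) : deg x = Some d -> has_deg x d.
Proof. by move=> dx; have := deg_specP x; rewrite dx. Qed.

Lemma has_degE (x : laurent) (d : int) : has_deg x d -> deg x = Some d.
Proof.
move=> [xd_neq0 x_above]; have := deg_specP x; case: (deg x) => [d'|] /=.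
  move=> [xd'_neq0 x_above']; congr Some.
  have [lt|lt|//] := ltgtP d d'.
    by move: xd'_neq0; rewrite x_above.
  by move: xd_neq0; rewrite x_above'.
by move=> x0; move: xd_neq0; rewrite x0 eqxx.
Qed.

Lemma deg0 : deg Lzero = None.
Proof.
by have := deg_specP Lzero; case: (deg Lzero) => [d [+ _]|//]; rewrite eqxx.
Qed.

Lemma deg_neq0 (x : laurent) : x <> Lzero -> exists d, deg x = Some d.
Proof.
move=> x_neq0; have := deg_specP x; by case: (deg x) => [d _|//]; exists d.
Qed.

Lemma neq0_deg (x : laurent) (d : int) : deg x = Some d -> x <> Lzero.
Proof. by move=> dx x0; move: dx; rewrite x0 deg0. Qed.

Lemma deg_one : deg Lone = Some 0.
Proof. by apply: has_degE; split => [|i hi] /=; rewrite ?oner_neq0 // gt_eqF. Qed.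

Lemma deg_two : deg Ltwo = Some 0.
Proof. by apply: has_degE; split => [|i hi] /=; rewrite ?eqxx // gt_eqF // addr0. Qed.

Lemma deg_four : deg Lfour = Some 0.
Proof. by apply: has_degE; split => [|i hi] /=; rewrite ?eqxx // gt_eqF // !addr0. Qed.

Lemma deg_mul (x y : laurent) (d e : int) :
  deg x = Some d -> deg y = Some e -> deg (Lmul x y) = Some (d + e).
Proof.
move=> /deg_has_deg[xd_neq0 x_above] /deg_has_deg[ye_neq0 y_above].
apply: has_degE; split => /=; first by rewrite (mul_coef_lead x_above y_above) mulf_neq0.
by move=> i; apply: (mul_coef_above x_above y_above).
Qed.

Lemma deg_mul_cofactor (x y : laurent) (d e : int) :
  deg x = Some d -> deg (Lmul x y) = Some e -> deg y = Some (e - d).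
Proof.
move=> dx dxy; have y_neq0 : y <> Lzero by move=> y0; move: dxy; rewrite y0 mulL0 deg0.
have [e' dy] := deg_neq0 y_neq0.
by move: dxy; rewrite (deg_mul dx dy) dy => -[<-]; congr Some; lia.
Qed.

Section Inverse.
Variables (x : laurent) (d : int).
Hypotheses (xd_neq0 : coef x d != 0) (x_above : forall i : int, d < i -> coef x i = 0).

(* The coefficient [inv_coef k] of T^(-d-k) in 1/x is forced by the coefficient of
   T^(-k) in x * (1/x): [\sum_(j <= k) coef x (d - j) * inv_coef (k - j) = (k == 0)]. *)
Definition inv_step (s : seq rat) : rat :=
  (coef x d)^-1 * ((size s == 0%N)%:R -
     \sum_(j < size s) coef x (d - (j.+1)%:Z) * s`_(size s - j.+1)).

Fixpoint inv_prefix (k : nat) : seq rat :=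
  if k is k'.+1 then rcons (inv_prefix k') (inv_step (inv_prefix k')) else [::].

Lemma size_inv_prefix (k : nat) : size (inv_prefix k) = k.
Proof. by elim: k => //= k IHk; rewrite size_rcons IHk. Qed.

Definition inv_coef (k : nat) : rat := (inv_prefix k.+1)`_k.

Lemma nth_inv_prefix (k i : nat) : (i < k)%N -> (inv_prefix k)`_i = inv_coef i.
Proof.
elim: k => // k IHk lt_ik /=; rewrite nth_rcons size_inv_prefix.
case: ltnP => le_ki; first exact: IHk.
have -> : i = k by lia.
by rewrite eqxx /inv_coef /= nth_rcons size_inv_prefix ltnn eqxx.
Qed.

Lemma inv_coefE (k : nat) : inv_coef k = (coef x d)^-1 * ((k == 0%N)%:R -
  \sum_(j < k) coef x (d - (j.+1)%:Z) * inv_coef (k - j.+1)).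
Proof.
rewrite {1}/inv_coef /= nth_rcons size_inv_prefix ltnn eqxx /inv_step size_inv_prefix.
by congr (_ * (_ - _)); apply: eq_bigr => -[j lt_jk] _ /=; rewrite nth_inv_prefix //; lia.
Qed.

Definition inv_series_coef (j : int) : rat :=
  if j <= - d then inv_coef (absz (- d - j)) else 0.

Lemma inv_series_bnd : exists N : int, forall i : int, N < i -> inv_series_coef i = 0.
Proof. by exists (- d) => i lt_i; rewrite /inv_series_coef leNgt lt_i. Qed.

Definition inv_series : laurent := Laurent inv_series_bnd.

Lemma inv_seriesE (k : nat) : coef inv_series (- d - k%:Z) = inv_coef k.
Proof.
rewrite /= /inv_series_coef ifT; last by lia.
by rewrite (_ : - d - (- d - k%:Z) = k%:Z) //; lia.
Qed.

Lemma mul_inv_series : Lmul x inv_series = Lone.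
Proof.
have inv_above (i : int) : - d < i -> coef inv_series i = 0.
  by move=> lt_i /=; rewrite /inv_series_coef leNgt lt_i.
apply: laurent_ext => n /=; rewrite (mul_coef_window n x_above inv_above).
have [n_gt0|n_le0] := ltrP 0 n.
  by rewrite gt_eqF //; apply: window_sum_eq0 => k hk; exfalso; lia.
have [m ->] : exists m : nat, n = - m%:Z by exists (absz n); lia.
rewrite /window_sum (_ : absz _ = m.+1); last by lia.
rewrite big_ord_recr (reindex_inj rev_ord_inj) /= [X in _ + X]/conv_term.
rewrite (_ : - m%:Z - - d + m%:Z = d); last by lia.
rewrite (_ : - m%:Z - d = - d - m%:Z); last by lia.
rewrite inv_seriesE (eq_bigr (fun j : 'I_m => coef x (d - (j.+1)%:Z) * inv_coef (m - j.+1))).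
  by rewrite [inv_coef m]inv_coefE mulrA mulfV // mul1r addrC subrK; case: m.
move=> [j lt_jm] _; rewrite /conv_term -inv_seriesE.
by congr (coef _ _ * coef _ _) => /=; lia.
Qed.

End Inverse.

Lemma LmulV (x : laurent) : x <> Lzero -> Lmul x (Linv x) = Lone.
Proof.
move=> x_neq0; have [d /deg_has_deg[xd_neq0 x_above]] := deg_neq0 x_neq0.
exact: (epsilon_spec (inhabits Lzero) (fun y => Lmul x y = Lone)
          (ex_intro _ _ (mul_inv_series xd_neq0 x_above))).
Qed.

Lemma deg_Linv (x : laurent) (d : int) : deg x = Some d -> deg (Linv x) = Some (- d).
Proof.
move=> dx; have := LmulV (neq0_deg dx) => /(congr1 deg).
by rewrite deg_one => /(deg_mul_cofactor dx); rewrite sub0r.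
Qed.

Lemma deg_root (x A : laurent) (d e : int) :
  deg x = Some d -> deg A = Some e -> deg (Ldiv x (Lmul Ltwo A)) = Some (d - e).
Proof.
move=> dx dA; rewrite /Ldiv (deg_mul dx (deg_Linv (deg_mul deg_two dA))).
by congr Some; lia.
Qed.

Lemma mul_root_numerators (A B C sD : laurent) : Lmul sD sD = disc A B C ->
  Lmul (Ladd sD (Lopp B)) (Ladd (Lopp sD) (Lopp B)) = Lmul Lfour (Lmul A C).
Proof.
move=> sD_sq; apply: laurent_ext => n /=.
have /= sD_sq_n := congr1 (coef^~ n) sD_sq.
rewrite mul_coefDl !mul_coefDr !mul_coefNl !mul_coefNr sD_sq_n (mul_coefC B sD).
ring.
Qed.

Theorem proposition10 (A B C sD : laurent) :
  ~ (in_QT A /\ in_QT B /\ in_QT C) ->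
  disc A B C <> Lzero ->
  Lmul sD sD = disc A B C ->
  reduced sD A B C -> reduced sD C B A.
Proof.
move=> _ _ sD_sq [A_neq0 [f_neq0 [deg_f deg_s]]].
move: f_neq0 deg_f deg_s; rewrite /first_root /second_root.
set a := Ladd sD (Lopp B); set b := Ladd (Lopp sD) (Lopp B).
move=> f_neq0 deg_f deg_s.
have [dA degA] := deg_neq0 A_neq0.
have [da dega] : exists da, deg a = Some da.
  by apply: deg_neq0 => a0; apply: f_neq0; rewrite /Ldiv a0 mul0L.
have [db degb] : exists db, deg b = Some db.
  by apply: deg_neq0 => b0; move: deg_s; rewrite /Ldiv b0 mul0L deg0.
have degC : deg C = Some (da + db - 0 - dA).
  have := deg_mul dega degb; rewrite (mul_root_numerators sD_sq).
  by move=> /(deg_mul_cofactor deg_four) /(deg_mul_cofactor degA).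
move: deg_f deg_s; rewrite (deg_root dega degA) (deg_root degb degA) /= => deg_f deg_s.
have deg_f' := deg_root dega degC; have deg_s' := deg_root degb degC.
split; first exact: neq0_deg degC.
rewrite /first_root /second_root -/a -/b deg_f' deg_s'.
split; first exact: neq0_deg deg_f'.
by split => /=; clear -deg_f deg_s; lia.
Qed.
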